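(* Let $\lambda:=\ell\inf_{r\ge r_0}\frac{d\sqrt{f}}{dr}$. Then $\lambda=1$ if $K\in\{-1,0\}$ and $\lambda\in(0,1)$ if $K=1$, and for every smooth compactly supported function $u$ on $\mathbb R^2$, $$\int_{\mathbb R^2}|\nabla u|^2_{{}^2g}\,d\mu_{{}^2g}\ \ge\ \frac{\lambda^2}{4\ell^2}\int_{\mathbb R^2}u^2\,d\mu_{{}^2g},$$ i.e. the first $L^2$-eigenvalue of $\nabla^*\nabla$ on functions on $(\mathbb R^2,{}^2g)$ is at least $\lambda^2/(4\ell^2)$.
   Context: Fix an integer $n\ge2$, constants $\ell>0$, $K\in\{-1,0,1\}$, $\mu\in\mathbb R$. Set $f(r)=\frac{r^2}{\ell^2}+K-\frac{2\mu}{r^{n-1}}$. Assume $\mu>0$ if $K\in\{0,1\}$ and $\mu>\mu_{\min}:=-\frac{1}{n+1}\big(\frac{n+1}{\ell^2(n-1)}\big)^{\frac{1-n}{2}}$ if $K=-1$; let $r_0>0$ be the largest zero of $f$ (simple; $f>0,f'>0$ on $(r_0,\infty)$). Let ${}^2g=f(r)dt^2+f(r)^{-1}dr^2$ on $\mathbb R^2$, with $r\in[r_0,\infty)$, $t$ periodic of period $4\pi/f'(r_0)$, $(r,t)$ polar-type coordinates centred at $r=r_0$. *)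

From Stdlib Require Import Reals Lra.
Open Scope R_scope.

Definition fBH (n : nat) (l K mu r : R) : R :=
  r ^ 2 / l ^ 2 + K - 2 * mu / r ^ (n - 1).

Definition mu_min (n : nat) (l : R) : R :=
  - (1 / (INR n + 1)) *
    Rpower ((INR n + 1) / (l ^ 2 * (INR n - 1))) ((1 - INR n) / 2).

Definition is_glb (E : R -> Prop) (m : R) : Prop :=
  (forall x, E x -> m <= x) /\ (forall b, (forall x, E x -> b <= x) -> b <= m).

Definition lam_set (n : nat) (l K mu r0 : R) (y : R) : Prop :=
  exists r d, r0 <= r /\
    derivable_pt_lim (fun s => sqrt (fBH n l K mu s)) r d /\ y = l * d.

Definition continuous2 (u : R -> R -> R) : Prop :=
  forall x y eps, 0 < eps -> exists delta, 0 < delta /\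
    forall x' y', Rabs (x' - x) < delta -> Rabs (y' - y) < delta ->
      Rabs (u x' y' - u x y) < eps.

Fixpoint Ck (k : nat) (u : R -> R -> R) : Prop :=
  match k with
  | O => continuous2 u
  | S k' => continuous2 u /\
      exists ux uy : R -> R -> R,
        (forall x y, derivable_pt_lim (fun s => u s y) x (ux x y)) /\
        (forall x y, derivable_pt_lim (fun s => u x s) y (uy x y)) /\
        Ck k' ux /\ Ck k' uy
  end.

Definition smooth2 (u : R -> R -> R) : Prop := forall k, Ck k u.

Definition compact_support2 (u : R -> R -> R) : Prop :=
  exists M, forall x y, M < Rabs x \/ M < Rabs y -> u x y = 0.

(* u (given in Cartesian coordinates of R^2) read in the (r,t) coordinates:
   x = rho(r) cos(kappa t), y = rho(r) sin(kappa t) *)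
Definition in_rt (rho : R -> R) (kappa : R) (u : R -> R -> R) (r t : R) : R :=
  u (rho r * cos (kappa * t)) (rho r * sin (kappa * t)).

(* |grad u|^2_g for g = f dt^2 + f^{-1} dr^2, given u_r, u_t *)
Definition grad_sq (fr ur ut : R) : R := fr * ur ^ 2 + ut ^ 2 / fr.

Definition RInt_eq (g : R -> R) (a b I : R) : Prop :=
  exists pr : Riemann_integrable g a b, RiemannInt pr = I.

(* Write [s = sqrt f] and [h = ds/dr], so that [lambda] is the infimum of [l h] over
   [r > r0].  With [m = lambda / l <= h], completing the square gives pointwise
   [f u_r^2 - m^2/4 u^2 >= -(m/2) (h u^2 + s (u^2)_r)], the [u_t] term being nonnegative.
   After integration over the circle the right side is the [r]-derivative of
   [-(m/2) s (integral of u^2 dt)], which vanishes beyond the support of [u] and is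
   nonpositive, so the radial integral of the left side is nonnegative.
   The value of [lambda] comes from [(l f'/2)^2 = f + E] for an explicit rational [E]:
   [E >= 0] when [K <= 0] (for [mu < 0] because [E] increases from a nonnegative value at
   the horizon), [E / f -> 0] at infinity, and for [K = 1] [E < 0] at large [r]. *)

From Coquelicot Require Import Coquelicot.
From Stdlib Require Import Reals Ranalysis5 Lra Psatz.
Open Scope R_scope.

(** * The black-hole function *)

(* [f_bh k] is [fBH (k + 2)], indexed so that the exponent [n - 1 = S k] involves no truncated subtraction. *)
Definition f_bh (k : nat) (l K mu r : R) : R := r ^ 2 / l ^ 2 + K - 2 * mu / r ^ S k.
Definition df_bh (k : nat) (l mu r : R) : R := 2 * r / l ^ 2 + 2 * (INR k + 1) * mu / (r * r * r ^ k).

Lemma f_bh_derive k l K mu r : 0 < r -> 0 < l -> derivable_pt_lim (f_bh k l K mu) r (df_bh k l mu r).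
Proof.
  intros Hr Hl. apply is_derive_Reals. unfold f_bh, df_bh.
  assert (Hp : 0 < r ^ k) by (apply pow_lt; lra).
  auto_derive.
  - simpl. apply Rgt_not_eq, Rmult_lt_0_compat; lra.
  - replace (match k with | 0%nat => 1 | S _ => INR k + 1 end) with (INR k + 1)
      by (destruct k; simpl; try ring; rewrite S_INR; ring).
    field. split; lra.
Qed.

Lemma f_bh_continuous k l K mu r : 0 < r -> 0 < l -> continuity_pt (f_bh k l K mu) r.
Proof. intros. apply derivable_continuous_pt. eexists. apply f_bh_derive; auto. Qed.

Lemma f_bh_pos_large k l K mu r : 0 < l -> -1 <= K ->
  1 <= r -> l * (2 + 2 * Rabs mu) <= r -> 0 < f_bh k l K mu r.
Proof.
  intros Hl HK H1 H2. unfold f_bh.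
  assert (HX : 1 <= r ^ S k) by (apply pow_R1_Rle; lra).
  assert (Hm : 2 * mu / r ^ S k <= 2 * Rabs mu).
  { apply Rle_trans with (2 * Rabs mu / r ^ S k).
    - unfold Rdiv. apply Rmult_le_compat_r; [left; apply Rinv_0_lt_compat; lra|].
      pose proof (Rle_abs mu); lra.
    - unfold Rdiv. pose proof (Rabs_pos mu).
      assert (/ r ^ S k <= 1) by (rewrite <- Rinv_1; apply Rinv_le_contravar; lra).
      nra. }
  assert (Hq : 2 + 2 * Rabs mu <= r / l).
  { apply Rmult_le_reg_r with l; auto. unfold Rdiv. rewrite Rmult_assoc, Rinv_l; lra. }
  replace (r ^ 2 / l ^ 2) with ((r / l) * (r / l)) by (field; lra).
  pose proof (Rabs_pos mu). nra.
Qed.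

(* [f] is eventually positive, so a negative value beyond [r0] would force a zero beyond [r0]. *)
Lemma f_bh_pos k l K mu r0 : 0 < l -> -1 <= K -> 0 < r0 ->
  (forall r, r0 < r -> f_bh k l K mu r <> 0) -> forall r, r0 < r -> 0 < f_bh k l K mu r.
Proof.
  intros Hl HK Hr0 Hnz r Hr.
  destruct (Rtotal_order 0 (f_bh k l K mu r)) as [H|[H|H]]; auto.
  - exfalso. apply (Hnz r Hr). auto.
  - exfalso.
    set (R1 := r + 1 + l * (2 + 2 * Rabs mu)).
    assert (HR1 : r < R1) by (unfold R1; pose proof (Rabs_pos mu); nra).
    destruct (IVT_interv (f_bh k l K mu) r R1) as [z [Hz Hfz]]; auto.
    + intros a Ha. apply f_bh_continuous; lra.
    + apply f_bh_pos_large; auto; unfold R1; pose proof (Rabs_pos mu); nra.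
    + apply (Hnz z); auto; lra.
Qed.

Lemma derive_ge0_at_root_right (g : R -> R) x d : g x = 0 -> (forall y, x < y -> 0 < g y) ->
  derivable_pt_lim g x d -> 0 <= d.
Proof.
  intros H0 Hp Hd. destruct (Rle_or_lt 0 d) as [?|Hneg]; auto. exfalso.
  destruct (Hd (- d / 2)) as [del Hdel]; [lra|].
  set (h := del / 2).
  assert (Hh : 0 < h) by (unfold h; destruct del; simpl; lra).
  assert (Habs : Rabs h < del) by (rewrite Rabs_right by lra; unfold h; destruct del; simpl; lra).
  specialize (Hdel h ltac:(lra) Habs). rewrite H0 in Hdel.
  assert (0 < (g (x + h) - 0) / h) by (apply Rdiv_lt_0_compat; [rewrite Rminus_0_r; apply Hp|]; lra).
  pose proof (Rle_abs ((g (x + h) - 0) / h - d)). lra.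
Qed.

(* Eliminating [mu] between [f r0 = 0] and [f' r0 = 0] leaves [(n-1) K l^2 + (n+1) r0^2 = 0]. *)
Lemma double_root_mu_min k l K mu r0 : 0 < l -> 0 < r0 -> (K = -1 \/ K = 0 \/ K = 1) ->
  f_bh k l K mu r0 = 0 -> df_bh k l mu r0 = 0 -> K = -1 /\ mu = mu_min (S (S k)) l.
Proof.
  intros Hl Hr HK Hf Hd. unfold f_bh, df_bh in *.
  set (N := INR k + 2).
  assert (HN : 2 <= N) by (unfold N; pose proof (pos_INR k); lra).
  assert (HP : 0 < r0 ^ k) by (apply pow_lt; auto).
  replace (r0 ^ S k) with (r0 * r0 ^ k) in Hf by (simpl; ring).
  remember (r0 ^ k) as P eqn:HPdef.
  replace (INR k + 1) with (N - 1) in Hd by (unfold N; ring).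
  assert (Hd' : 2 * r0 ^ 3 * P + 2 * (N - 1) * mu * l ^ 2 = 0).
  { rewrite <- (Rmult_0_l (l ^ 2 * r0 * r0 * P)), <- Hd. field. split; lra. }
  assert (Hf' : r0 ^ 3 * P + K * l ^ 2 * r0 * P - 2 * mu * l ^ 2 = 0).
  { rewrite <- (Rmult_0_l (l ^ 2 * r0 * P)), <- Hf. field. split; lra. }
  assert (HK2 : (N - 1) * K * l ^ 2 + (N + 1) * r0 ^ 2 = 0).
  { assert (0 < r0 * P) by nra.
    apply Rmult_eq_reg_r with (r0 * P); [|lra]. nra. }
  assert (HKm : K = -1) by (destruct HK as [?|[?|?]]; auto; subst K; exfalso; nra).
  split; [exact HKm|]. subst K.
  assert (Hr2 : r0 ^ 2 = (N - 1) * l ^ 2 / (N + 1)).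
  { apply Rmult_eq_reg_r with (N + 1); [|lra]. unfold Rdiv. rewrite Rmult_assoc, Rinv_l by lra. lra. }
  assert (Hmu : mu = - r0 * P / (N + 1)).
  { apply Rmult_eq_reg_r with (2 * (N - 1) * l ^ 2); [|nra].
    replace (- r0 * P / (N + 1) * (2 * (N - 1) * l ^ 2)) with (- 2 * r0 * P * ((N - 1) * l ^ 2 / (N + 1)))
      by (field; lra).
    rewrite <- Hr2. nra. }
  rewrite Hmu. unfold mu_min.
  replace (INR (S (S k))) with N by (unfold N; rewrite !S_INR; ring).
  replace ((N + 1) / (l ^ 2 * (N - 1))) with (Rpower r0 (- INR 2)).
  2:{ rewrite Rpower_Ropp, Rpower_pow by lra. rewrite Hr2. field. split; lra. }
  rewrite Rpower_mult.
  replace (- INR 2 * ((1 - N) / 2)) with (INR (S k)) by (unfold N; rewrite S_INR; simpl; field).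
  rewrite Rpower_pow by lra. rewrite HPdef. simpl. field. lra.
Qed.

Lemma df_bh_pos k l mu r0 : 0 < l -> 0 < r0 -> 0 < df_bh k l mu r0 ->
  forall r, r0 <= r -> 0 < df_bh k l mu r.
Proof.
  intros Hl Hr0 Hp r Hr. unfold df_bh in *.
  assert (HP0 : 0 < r0 ^ k) by (apply pow_lt; auto).
  assert (HP : r0 ^ k <= r ^ k) by (apply pow_incr; lra).
  assert (HA : 0 < r0 * r0 * r0 ^ k) by (apply Rmult_lt_0_compat; [apply Rmult_lt_0_compat|]; lra).
  assert (HAB : r0 * r0 * r0 ^ k <= r * r * r ^ k).
  { apply Rmult_le_compat; try lra. apply Rmult_le_pos; lra. apply Rmult_le_compat; lra. }
  assert (Hl2 : 0 < l ^ 2) by (apply pow_lt; lra).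
  assert (H1 : 2 * r0 / l ^ 2 <= 2 * r / l ^ 2).
  { unfold Rdiv. apply Rmult_le_compat_r; [left; apply Rinv_0_lt_compat|]; lra. }
  pose proof (pos_INR k).
  destruct (Rle_or_lt 0 mu) as [Hm|Hm].
  - assert (0 <= 2 * (INR k + 1) * mu / (r * r * r ^ k)).
    { unfold Rdiv. apply Rmult_le_pos; [apply Rmult_le_pos; lra|left; apply Rinv_0_lt_compat; lra]. }
    assert (0 < 2 * r / l ^ 2) by (apply Rdiv_lt_0_compat; lra). lra.
  - assert (2 * (INR k + 1) * mu / (r0 * r0 * r0 ^ k) <= 2 * (INR k + 1) * mu / (r * r * r ^ k)).
    { assert (/ (r * r * r ^ k) <= / (r0 * r0 * r0 ^ k)) by (apply Rinv_le_contravar; lra).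
      assert (2 * (INR k + 1) * mu < 0) by nra.
      unfold Rdiv. nra. }
    lra.
Qed.

Lemma sqrt_f_bh_derive k l K mu r : 0 < r -> 0 < l -> 0 < f_bh k l K mu r ->
  derivable_pt_lim (fun s => sqrt (f_bh k l K mu s)) r (df_bh k l mu r / (2 * sqrt (f_bh k l K mu r))).
Proof.
  intros Hr Hl Hf.
  replace (df_bh k l mu r / (2 * sqrt (f_bh k l K mu r)))
    with (/ (2 * sqrt (f_bh k l K mu r)) * df_bh k l mu r) by (unfold Rdiv; ring).
  apply (derivable_pt_lim_comp (f_bh k l K mu) sqrt); [apply f_bh_derive; auto|].
  apply derivable_pt_lim_sqrt; auto.
Qed.

Lemma df_bh_continuous k l mu r : 0 < r -> continuity_pt (df_bh k l mu) r.
Proof.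
  intros Hr. apply continuity_pt_filterlim.
  apply (ex_derive_continuous (K := R_AbsRing) (V := R_NormedModule) (df_bh k l mu)). unfold df_bh.
  assert (0 < r ^ k) by (apply pow_lt; auto).
  auto_derive. apply Rgt_not_eq, Rmult_lt_0_compat; [apply Rmult_lt_0_compat|]; lra.
Qed.

Lemma dsqrt_f_bh_continuous k l K mu r : 0 < l -> 0 < r -> 0 < f_bh k l K mu r ->
  continuity_pt (fun s => df_bh k l mu s / (2 * sqrt (f_bh k l K mu s))) r.
Proof.
  intros Hl Hr Hf.
  apply (continuity_pt_div (df_bh k l mu) (fun s => 2 * sqrt (f_bh k l K mu s))).
  - apply df_bh_continuous, Hr.
  - apply (continuity_pt_scal (fun s => sqrt (f_bh k l K mu s))), derivable_continuous_pt.
    eexists. apply sqrt_f_bh_derive; auto.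
  - assert (0 < sqrt (f_bh k l K mu r)) by (apply sqrt_lt_R0; auto). lra.
Qed.

Lemma derivable_pt_lim_unique_right (g1 g2 : R -> R) x d1 d2 :
  (forall y, x <= y -> g1 y = g2 y) ->
  derivable_pt_lim g1 x d1 -> derivable_pt_lim g2 x d2 -> d1 = d2.
Proof.
  intros Heq H1 H2. destruct (Req_dec d1 d2) as [|Hne]; [assumption|exfalso].
  set (e := Rabs (d1 - d2) / 2).
  assert (He : 0 < e) by (unfold e; apply Rdiv_lt_0_compat; [apply Rabs_pos_lt; lra|lra]).
  destruct (H1 e He) as [del1 Hd1]. destruct (H2 e He) as [del2 Hd2].
  set (h := Rmin del1 del2 / 2).
  assert (Hmin : 0 < Rmin del1 del2) by (apply Rmin_pos; apply cond_pos).
  pose proof (Rmin_l del1 del2). pose proof (Rmin_r del1 del2).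
  assert (Hh : Rabs h = h) by (apply Rabs_right; unfold h; lra).
  specialize (Hd1 h ltac:(unfold h; lra) ltac:(unfold h in *; lra)).
  specialize (Hd2 h ltac:(unfold h; lra) ltac:(unfold h in *; lra)).
  rewrite !Heq in Hd1 by (unfold h; lra).
  pose proof (Rabs_triang ((g2 (x + h) - g2 x) / h - d2) (d1 - (g2 (x + h) - g2 x) / h)) as Htri.
  rewrite <- Rabs_Ropp in Hd1.
  replace (- ((g2 (x + h) - g2 x) / h - d1)) with (d1 - (g2 (x + h) - g2 x) / h) in Hd1 by ring.
  replace ((g2 (x + h) - g2 x) / h - d2 + (d1 - (g2 (x + h) - g2 x) / h)) with (d1 - d2) in Htri by ring.
  unfold e in *. lra.
Qed.

Lemma one_le_div_sqrt (a F : R) : 0 < a -> 0 < F -> F <= a ^ 2 -> 1 <= a / sqrt F.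
Proof.
  intros Ha HF HaF. assert (Hs : 0 < sqrt F) by (apply sqrt_lt_R0; auto).
  assert (sqrt F <= a) by (rewrite <- (sqrt_pow2 a) by lra; apply sqrt_le_1_alt; lra).
  apply Rmult_le_reg_r with (sqrt F); auto. unfold Rdiv. rewrite Rmult_assoc, Rinv_l; lra.
Qed.

Lemma div_sqrt_lt (a F b : R) : 0 < a -> 0 < F -> 0 < b -> a ^ 2 < b ^ 2 * F -> a / sqrt F < b.
Proof.
  intros Ha HF Hb HaF. assert (Hs : 0 < sqrt F) by (apply sqrt_lt_R0; auto).
  assert (a < b * sqrt F).
  { rewrite <- (sqrt_pow2 a), <- (sqrt_pow2 b) by lra. rewrite <- sqrt_mult_alt by nra.
    apply sqrt_lt_1_alt. split; nra. }
  apply Rmult_lt_reg_r with (sqrt F); auto. unfold Rdiv. rewrite Rmult_assoc, Rinv_l; lra.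
Qed.

(* [lam_at r = l * (d sqrt f / dr)(r)], whose infimum over [r > r0] is [lambda]. *)
Definition lam_at (k : nat) (l K mu r : R) : R := l * df_bh k l mu r / (2 * sqrt (f_bh k l K mu r)).
Definition slope_excess (k : nat) (l K mu r : R) : R :=
  2 * (INR k + 2) * mu / (r * r ^ k) + (INR k + 1) ^ 2 * mu ^ 2 * l ^ 2 / (r ^ 2 * (r * r ^ k) ^ 2) - K.

Lemma half_slope_sq k l K mu r : 0 < r -> 0 < l ->
  (l * df_bh k l mu r / 2) ^ 2 = f_bh k l K mu r + slope_excess k l K mu r.
Proof.
  intros Hr Hl. assert (0 < r ^ k) by (apply pow_lt; auto).
  unfold df_bh, f_bh, slope_excess. simpl (r ^ S k). field. repeat split; lra.
Qed.

Lemma lam_at_div k l K mu r : lam_at k l K mu r = (l * df_bh k l mu r / 2) / sqrt (f_bh k l K mu r).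
Proof.
  unfold lam_at, Rdiv. rewrite Rinv_mult. ring.
Qed.

Lemma one_le_lam_at k l K mu r : 0 < r -> 0 < l -> 0 < f_bh k l K mu r -> 0 < df_bh k l mu r ->
  0 <= slope_excess k l K mu r -> 1 <= lam_at k l K mu r.
Proof.
  intros Hr Hl Hf Hdf HD. rewrite lam_at_div.
  apply one_le_div_sqrt; auto. apply Rdiv_lt_0_compat; [apply Rmult_lt_0_compat|]; lra.
  rewrite (half_slope_sq k l K mu r); auto. lra.
Qed.

Lemma lam_at_lt k l K mu r b : 0 < r -> 0 < l -> 0 < f_bh k l K mu r -> 0 < df_bh k l mu r -> 0 < b ->
  slope_excess k l K mu r < (b ^ 2 - 1) * f_bh k l K mu r -> lam_at k l K mu r < b.
Proof.
  intros Hr Hl Hf Hdf Hb HD. rewrite lam_at_div.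
  apply div_sqrt_lt; auto. apply Rdiv_lt_0_compat; [apply Rmult_lt_0_compat|]; lra.
  rewrite (half_slope_sq k l K mu r); auto. lra.
Qed.

(* With [p = -mu / r0^(n-1)], the horizon equation gives [r0^2 = l^2 (1 - 2p)], and then
   [r0^2 * slope_excess r0 = l^2 (1 - (n+1) p)^2]. *)
Lemma slope_excess_horizon_nonneg k l mu r0 : 0 < l -> 0 < r0 -> mu < 0 -> f_bh k l (-1) mu r0 = 0 ->
  0 <= slope_excess k l (-1) mu r0.
Proof.
  intros Hl Hr Hmu Hf. unfold f_bh, slope_excess in *.
  assert (HP : 0 < r0 ^ k) by (apply pow_lt; auto).
  replace (r0 ^ S k) with (r0 * r0 ^ k) in Hf by (simpl; ring).
  set (X0 := r0 * r0 ^ k) in *. assert (HX : 0 < X0) by (unfold X0; nra).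
  set (p := - mu / X0).
  assert (E : r0 ^ 2 = l ^ 2 * (1 - 2 * p)).
  { assert (Hf' : (r0 ^ 2 / l ^ 2 + -1 - 2 * mu / X0) * l ^ 2 = 0) by (rewrite Hf; ring).
    unfold p. replace ((r0 ^ 2 / l ^ 2 + -1 - 2 * mu / X0) * l ^ 2) with
      (r0 ^ 2 - l ^ 2 * (1 - 2 * (- mu / X0))) in Hf' by (field; lra). lra. }
  set (N := INR k + 2).
  assert (Hr2 : 0 < r0 ^ 2) by nra.
  assert (Hid : (2 * N * mu / X0 + (N - 1) ^ 2 * mu ^ 2 * l ^ 2 / (r0 ^ 2 * X0 ^ 2) - -1) * r0 ^ 2
     = r0 ^ 2 - 2 * N * p * r0 ^ 2 + (N - 1) ^ 2 * p ^ 2 * l ^ 2) by (unfold p; field; lra).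
  replace (INR k + 1) with (N - 1) by (unfold N; ring).
  apply Rmult_le_reg_r with (r0 ^ 2); auto. rewrite Rmult_0_l. fold N. rewrite Hid, E.
  replace (l ^ 2 * (1 - 2 * p) - 2 * N * p * (l ^ 2 * (1 - 2 * p)) + (N - 1) ^ 2 * p ^ 2 * l ^ 2)
    with (l ^ 2 * (1 - (N + 1) * p) ^ 2) by ring.
  apply Rmult_le_pos; [nra|apply pow2_ge_0].
Qed.

Lemma slope_excess_as_poly k l mu r0 r : 0 < l -> 0 < r0 -> 0 < r ->
  let X0 := r0 * r0 ^ k in let N := INR k + 2 in
  let P := 2 * N * (- mu) / X0 in
  let Q := (N - 1) ^ 2 * mu ^ 2 * l ^ 2 / (r0 ^ 2 * X0 ^ 2) in
  let s := r0 / r in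
  slope_excess k l (-1) mu r = 1 - (P * s ^ S k - Q * (s * s ^ S k) ^ 2).
Proof.
  intros Hl Hr0 Hr X0 N P Q s.
  assert (0 < r ^ k) by (apply pow_lt; auto).
  assert (0 < r0 ^ k) by (apply pow_lt; auto).
  assert (Hs : s ^ S k = r0 ^ S k / r ^ S k) by (unfold s, Rdiv; rewrite Rpow_mult_distr, pow_inv; reflexivity).
  rewrite Hs. unfold slope_excess, P, Q, X0, N, s. simpl (r0 ^ S k). simpl (r ^ S k).
  field. repeat split; lra.
Qed.

Lemma excess_poly_le_one k P Q s : 0 <= Q -> 2 * (INR k + 2) * Q <= (INR k + 1) * P -> 0 < s < 1 ->
  P * s ^ S k - Q * (s * s ^ S k) ^ 2 <= P - Q.
Proof.
  intros HQ HPQ Hs.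
  assert (Hderiv : forall c, derivable_pt_lim (fun s => P * s ^ S k - Q * (s * s ^ S k) ^ 2) c
      (c ^ k * ((INR k + 1) * P - 2 * (INR k + 2) * Q * (c ^ 3 * c ^ k)))).
  { intros c. apply is_derive_Reals. auto_derive; [auto|].
    replace (match k with | 0%nat => 1 | S _ => INR k + 1 end) with (INR k + 1)
      by (destruct k; simpl; try ring; rewrite S_INR; ring).
    simpl. ring. }
  destruct (MVT_cor2 _ _ s 1 (proj2 Hs) (fun c _ => Hderiv c)) as [c [Hc1 Hc2]].
  assert (Hck : 0 < c ^ k) by (apply pow_lt; lra).
  assert (Hc3 : c ^ 3 * c ^ k <= 1).
  { assert (0 <= c ^ 3 <= 1) by (split; [apply pow_le|rewrite <- (pow1 3); apply pow_incr]; lra).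
    assert (c ^ k <= 1) by (rewrite <- (pow1 k); apply pow_incr; lra). nra. }
  assert (2 * (INR k + 2) * Q * (c ^ 3 * c ^ k) <= 2 * (INR k + 2) * Q).
  { pose proof (pos_INR k). rewrite <- (Rmult_1_r (2 * (INR k + 2) * Q)) at 2.
    apply Rmult_le_compat_l; [apply Rmult_le_pos|]; lra. }
  assert (0 <= c ^ k * ((INR k + 1) * P - 2 * (INR k + 2) * Q * (c ^ 3 * c ^ k)) * (1 - s))
    by (apply Rmult_le_pos; [apply Rmult_le_pos|]; lra).
  simpl in Hc1. rewrite !pow1 in *. simpl. lra.
Qed.

Lemma slope_excess_mono k l mu r0 r : 0 < l -> 0 < r0 -> r0 < r -> mu < 0 ->
  0 <= df_bh k l mu r0 -> slope_excess k l (-1) mu r0 <= slope_excess k l (-1) mu r.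
Proof.
  intros Hl Hr0 Hr Hmu Hdf.
  rewrite (slope_excess_as_poly k l mu r0 r0), (slope_excess_as_poly k l mu r0 r) by lra.
  set (X0 := r0 * r0 ^ k). set (N := INR k + 2).
  set (P := 2 * N * (- mu) / X0).
  set (Q := (N - 1) ^ 2 * mu ^ 2 * l ^ 2 / (r0 ^ 2 * X0 ^ 2)).
  replace (r0 / r0) with 1 by (field; lra). rewrite !pow1, Rmult_1_l, pow1.
  assert (HP0 : 0 < r0 ^ k) by (apply pow_lt; auto).
  assert (HX0 : 0 < X0) by (unfold X0; nra).
  assert (HN : 2 <= N) by (unfold N; pose proof (pos_INR k); lra).
  assert (HQ : 0 <= Q).
  { unfold Q, Rdiv. apply Rmult_le_pos; [apply Rmult_le_pos; [apply Rmult_le_pos|]; apply pow2_ge_0|].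
    left; apply Rinv_0_lt_compat, Rmult_lt_0_compat; apply pow_lt; lra. }
  assert (Hkey : 2 * N * Q <= (N - 1) * P).
  { (* [df_bh r0 >= 0] cleared of denominators, then scaled by [c] *)
    assert (H1 : (N - 1) * (- mu) * l ^ 2 <= r0 ^ 2 * X0).
    { unfold df_bh in Hdf. replace (INR k + 1) with (N - 1) in Hdf by (unfold N; ring).
      assert (Hq : 0 <= (2 * r0 / l ^ 2 + 2 * (N - 1) * mu / (r0 * r0 * r0 ^ k)) * (l ^ 2 * r0 * X0 / 2))
        by (apply Rmult_le_pos; [lra|apply Rmult_le_pos; [apply Rmult_le_pos; [apply Rmult_le_pos; [apply pow2_ge_0|]|]|]; lra]).
      replace ((2 * r0 / l ^ 2 + 2 * (N - 1) * mu / (r0 * r0 * r0 ^ k)) * (l ^ 2 * r0 * X0 / 2))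
        with (r0 ^ 2 * X0 + (N - 1) * mu * l ^ 2) in Hq by (unfold X0; field; repeat split; lra).
      lra. }
    set (c := 2 * N * (N - 1) * (- mu) / (r0 ^ 2 * X0 ^ 2)).
    assert (Hc : 0 <= c) by (unfold c, Rdiv; apply Rmult_le_pos; [repeat apply Rmult_le_pos; lra|
      left; apply Rinv_0_lt_compat, Rmult_lt_0_compat; apply pow_lt; lra]).
    replace (2 * N * Q) with (c * ((N - 1) * (- mu) * l ^ 2)) by (unfold c, Q; field; split; lra).
    replace ((N - 1) * P) with (c * (r0 ^ 2 * X0)) by (unfold c, P; field; split; lra).
    apply Rmult_le_compat_l; auto. }
  assert (Hs : 0 < r0 / r < 1).
  { split; [apply Rdiv_lt_0_compat; lra|].
    apply Rmult_lt_reg_r with r; [lra|]. unfold Rdiv. rewrite Rmult_assoc, Rinv_l; lra. }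
  pose proof (excess_poly_le_one k P Q (r0 / r) HQ) as Hle.
  fold N in Hle. replace (INR k + 1) with (N - 1) in Hle by (unfold N; ring).
  specialize (Hle Hkey Hs). lra.
Qed.

Lemma slope_excess_nonneg k l K mu r : 0 <= mu -> K <= 0 -> 0 < r -> 0 <= slope_excess k l K mu r.
Proof.
  intros Hm HK Hr. unfold slope_excess. assert (0 < r ^ k) by (apply pow_lt; auto).
  assert (0 <= 2 * (INR k + 2) * mu / (r * r ^ k)).
  { unfold Rdiv. pose proof (pos_INR k).
    apply Rmult_le_pos; [apply Rmult_le_pos; lra|left; apply Rinv_0_lt_compat; nra]. }
  assert (0 <= (INR k + 1) ^ 2 * mu ^ 2 * l ^ 2 / (r ^ 2 * (r * r ^ k) ^ 2)).
  { unfold Rdiv. apply Rmult_le_pos; [apply Rmult_le_pos; [apply Rmult_le_pos|]; apply pow2_ge_0|].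
    left; apply Rinv_0_lt_compat, Rmult_lt_0_compat; apply pow_lt; nra. }
  lra.
Qed.

(* For [K = 1]: [l f' / 2 >= r / l] and [sqrt f <= (r + l) / l]. *)
Lemma lam_at_lower_bound k l mu r0 r : 0 < l -> 0 < r0 -> 0 < mu -> r0 <= r -> 0 < f_bh k l 1 mu r ->
  r0 / (r0 + l) <= lam_at k l 1 mu r.
Proof.
  intros Hl Hr0 Hmu Hr Hf. rewrite lam_at_div.
  assert (HP : 0 < r ^ k) by (apply pow_lt; lra).
  assert (Hdf : r / l <= l * df_bh k l mu r / 2).
  { unfold df_bh. pose proof (pos_INR k).
    assert (0 <= l * (2 * (INR k + 1) * mu / (r * r * r ^ k)) / 2).
    { assert (0 < r * r * r ^ k) by (apply Rmult_lt_0_compat; [apply Rmult_lt_0_compat|]; lra).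
      assert (0 < 2 * (INR k + 1) * mu / (r * r * r ^ k)) by (apply Rdiv_lt_0_compat; nra).
      nra. }
    replace (l * (2 * r / l ^ 2 + 2 * (INR k + 1) * mu / (r * r * r ^ k)) / 2) with
      (r / l + l * (2 * (INR k + 1) * mu / (r * r * r ^ k)) / 2) by (field; lra).
    lra. }
  assert (Hsq : sqrt (f_bh k l 1 mu r) <= (r + l) / l).
  { rewrite <- (sqrt_pow2 ((r + l) / l)) by (apply Rlt_le, Rdiv_lt_0_compat; lra).
    apply sqrt_le_1_alt. unfold f_bh.
    assert (0 <= 2 * mu / r ^ S k) by (apply Rlt_le, Rdiv_lt_0_compat; [lra|apply pow_lt; lra]).
    replace (((r + l) / l) ^ 2) with (r ^ 2 / l ^ 2 + 1 + 2 * r / l) by (field; lra).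
    assert (0 <= 2 * r / l) by (apply Rlt_le, Rdiv_lt_0_compat; lra). lra. }
  assert (Hs0 : 0 < sqrt (f_bh k l 1 mu r)) by (apply sqrt_lt_R0; auto).
  apply Rle_trans with ((r / l) / ((r + l) / l)).
  - replace (r / l / ((r + l) / l)) with (r / (r + l)) by (field; lra).
    apply Rmult_le_reg_r with ((r0 + l) * (r + l)); [nra|].
    replace (r0 / (r0 + l) * ((r0 + l) * (r + l))) with (r0 * (r + l)) by (field; lra).
    replace (r / (r + l) * ((r0 + l) * (r + l))) with (r * (r0 + l)) by (field; lra). nra.
  - unfold Rdiv. apply Rmult_le_compat; try lra.
    + apply Rmult_le_pos; [lra|left; apply Rinv_0_lt_compat; lra].
    + left; apply Rinv_0_lt_compat; lra.
    + apply Rinv_le_contravar; lra.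
Qed.

Lemma abs_div_le (a Y : R) : 1 <= Y -> Rabs (a / Y) <= Rabs a.
Proof.
  intros HY. unfold Rdiv. rewrite Rabs_mult, Rabs_inv, (Rabs_right Y) by lra.
  assert (/ Y <= 1) by (rewrite <- Rinv_1; apply Rinv_le_contravar; lra).
  assert (0 < / Y) by (apply Rinv_0_lt_compat; lra).
  pose proof (Rabs_pos a). nra.
Qed.

Lemma nonneg_div_le (a Y : R) : 0 <= a -> 1 <= Y -> a / Y <= a.
Proof.
  intros. unfold Rdiv. assert (/ Y <= 1) by (rewrite <- Rinv_1; apply Rinv_le_contravar; lra). nra.
Qed.

(* [slope_excess] stays bounded while [f] grows like [r^2 / l^2]. *)
Lemma lam_at_lt_far k l K mu r0 b : 0 < l -> 0 < r0 -> -1 <= K -> 1 < b ->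
  (forall r, r0 < r -> 0 < f_bh k l K mu r) -> (forall r, r0 < r -> 0 < df_bh k l mu r) ->
  exists r, r0 < r /\ lam_at k l K mu r < b.
Proof.
  intros Hl Hr0 HK Hb Hpos Hdf.
  set (N := INR k + 2).
  assert (HN : 2 <= N) by (unfold N; pose proof (pos_INR k); lra).
  set (C := b ^ 2 + (2 * b ^ 2 - 2 + 2 * N) * Rabs mu + (N - 1) ^ 2 * mu ^ 2 * l ^ 2 + 1).
  assert (Hb2 : 0 < b ^ 2 - 1) by nra.
  assert (HC : 0 < C).
  { unfold C. pose proof (Rabs_pos mu).
    assert (0 <= (N - 1) ^ 2 * mu ^ 2 * l ^ 2) by (apply Rmult_le_pos; [apply Rmult_le_pos|]; apply pow2_ge_0).
    nra. }
  assert (Hl2 : 0 < l ^ 2) by (apply pow_lt; lra).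
  set (r := r0 + 1 + C * l ^ 2 / (b ^ 2 - 1)).
  assert (HCl : 0 < C * l ^ 2 / (b ^ 2 - 1)) by (apply Rdiv_lt_0_compat; [apply Rmult_lt_0_compat|]; lra).
  assert (Hr1 : 1 <= r) by (unfold r; lra).
  exists r. split; [unfold r; lra|].
  apply lam_at_lt; try lra; [apply Hpos|apply Hdf|]; try (unfold r; lra).
  assert (HX : 1 <= r * r ^ k) by (change (1 <= r ^ S k); apply pow_R1_Rle; lra).
  assert (Hid : (b ^ 2 - 1) * f_bh k l K mu r - slope_excess k l K mu r =
     (b ^ 2 - 1) * (r ^ 2 / l ^ 2) + b ^ 2 * K - (2 * b ^ 2 - 2 + 2 * N) * (mu / (r * r ^ k))
     - (N - 1) ^ 2 * mu ^ 2 * l ^ 2 / (r ^ 2 * (r * r ^ k) ^ 2)).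
  { unfold f_bh, slope_excess, N. simpl (r ^ S k). field.
    assert (0 < r ^ k) by (apply pow_lt; lra). repeat split; nra. }
  assert (A1 : (2 * b ^ 2 - 2 + 2 * N) * (mu / (r * r ^ k)) <= (2 * b ^ 2 - 2 + 2 * N) * Rabs mu).
  { apply Rmult_le_compat_l; [nra|].
    pose proof (abs_div_le mu (r * r ^ k) HX). pose proof (Rle_abs (mu / (r * r ^ k))). lra. }
  assert (A2 : (N - 1) ^ 2 * mu ^ 2 * l ^ 2 / (r ^ 2 * (r * r ^ k) ^ 2) <= (N - 1) ^ 2 * mu ^ 2 * l ^ 2).
  { apply nonneg_div_le; [apply Rmult_le_pos; [apply Rmult_le_pos|]; apply pow2_ge_0|].
    assert (1 <= r ^ 2) by (apply pow_R1_Rle; lra). assert (1 <= (r * r ^ k) ^ 2) by (apply pow_R1_Rle; lra). nra. }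
  assert (A3 : C <= (b ^ 2 - 1) * (r ^ 2 / l ^ 2)).
  { assert (r <= r ^ 2) by (simpl; nra).
    assert (C <= (b ^ 2 - 1) * (r / l ^ 2)).
    { apply Rmult_le_reg_r with (l ^ 2 / (b ^ 2 - 1)); [apply Rdiv_lt_0_compat; lra|].
      replace ((b ^ 2 - 1) * (r / l ^ 2) * (l ^ 2 / (b ^ 2 - 1))) with r by (field; lra).
      replace (C * (l ^ 2 / (b ^ 2 - 1))) with (C * l ^ 2 / (b ^ 2 - 1)) by (field; lra).
      unfold r; lra. }
    assert (r / l ^ 2 <= r ^ 2 / l ^ 2) by (unfold Rdiv; apply Rmult_le_compat_r; [left; apply Rinv_0_lt_compat|]; lra).
    nra. }
  assert (A4 : - b ^ 2 <= b ^ 2 * K) by nra.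
  unfold C in A3. lra.
Qed.

(* For [K = 1], [slope_excess = 2 n mu / r^(n-1) + ... - 1] is negative for large [r]. *)
Lemma lam_at_lt_one_far k l mu r0 : 0 < l -> 0 < r0 -> 0 < mu ->
  (forall r, r0 < r -> 0 < f_bh k l 1 mu r) -> (forall r, r0 < r -> 0 < df_bh k l mu r) ->
  exists r, r0 < r /\ lam_at k l 1 mu r < 1.
Proof.
  intros Hl Hr0 Hmu Hpos Hdf.
  set (N := INR k + 2).
  assert (HN : 2 <= N) by (unfold N; pose proof (pos_INR k); lra).
  set (C := 2 * N * mu + (N - 1) ^ 2 * mu ^ 2 * l ^ 2).
  assert (HC : 0 < C).
  { unfold C. assert (0 <= (N - 1) ^ 2 * mu ^ 2 * l ^ 2)
      by (apply Rmult_le_pos; [apply Rmult_le_pos|]; apply pow2_ge_0). nra. }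
  set (r := r0 + 1 + C).
  assert (Hr1 : 1 <= r) by (unfold r; lra).
  exists r. split; [unfold r; lra|].
  apply lam_at_lt; try lra; [apply Hpos|apply Hdf|]; try (unfold r; lra).
  replace ((1 ^ 2 - 1) * f_bh k l 1 mu r) with 0 by ring.
  assert (Hk : 1 <= r ^ k) by (apply pow_R1_Rle; lra).
  assert (HX : r <= r * r ^ k) by nra.
  assert (HrX : r <= r ^ 2 * (r * r ^ k) ^ 2).
  { assert (1 <= r ^ 2) by (apply pow_R1_Rle; lra). assert (r <= (r * r ^ k) ^ 2) by (simpl; nra). nra. }
  unfold slope_excess. fold N. replace (INR k + 1) with (N - 1) by (unfold N; ring).
  assert (B1 : 2 * N * mu / (r * r ^ k) <= 2 * N * mu / r).
  { unfold Rdiv. apply Rmult_le_compat_l; [nra|]. apply Rinv_le_contravar; lra. }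
  assert (B2 : (N - 1) ^ 2 * mu ^ 2 * l ^ 2 / (r ^ 2 * (r * r ^ k) ^ 2) <= (N - 1) ^ 2 * mu ^ 2 * l ^ 2 / r).
  { unfold Rdiv. apply Rmult_le_compat_l; [apply Rmult_le_pos; [apply Rmult_le_pos|]; apply pow2_ge_0|].
    apply Rinv_le_contravar; lra. }
  assert (B3 : 2 * N * mu / r + (N - 1) ^ 2 * mu ^ 2 * l ^ 2 / r < 1).
  { replace (2 * N * mu / r + (N - 1) ^ 2 * mu ^ 2 * l ^ 2 / r) with (C / r) by (unfold C; field; lra).
    apply Rmult_lt_reg_r with r; [lra|]. unfold Rdiv. rewrite Rmult_assoc, Rinv_l by lra. unfold r; lra. }
  lra.
Qed.

Lemma is_glb_exists (E : R -> Prop) :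
  (exists x, E x) -> (exists b, forall x, E x -> b <= x) -> exists m, is_glb E m.
Proof.
  intros [x0 Hx0] [b Hb].
  destruct (completeness (fun x => E (- x))) as [L [HL1 HL2]].
  - exists (- b). intros x Hx. specialize (Hb _ Hx). lra.
  - exists (- x0). rewrite Ropp_involutive. exact Hx0.
  - exists (- L). split.
    + intros x Hx. assert (- x <= L) by (apply HL1; rewrite Ropp_involutive; exact Hx). lra.
    + intros c Hc. assert (L <= - c) by (apply HL2; intros x Hx; specialize (Hc _ Hx); lra). lra.
Qed.

Section Horizon.

Variables (k : nat) (l K mu r0 : R).
Hypotheses (Hl : 0 < l) (HK : K = -1 \/ K = 0 \/ K = 1)
  (Hmu_pos : (K = 0 \/ K = 1) -> 0 < mu) (Hmu_min : K = -1 -> mu_min (S (S k)) l < mu)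
  (Hr0 : 0 < r0) (Hroot : f_bh k l K mu r0 = 0)
  (Hnz : forall r, r0 < r -> f_bh k l K mu r <> 0).

Lemma K_ge_m1 : -1 <= K.
Proof. destruct HK as [->|[->| ->]]; lra. Qed.

Lemma f_bh_pos_horizon r : r0 < r -> 0 < f_bh k l K mu r.
Proof. apply (f_bh_pos k l K mu r0 Hl K_ge_m1 Hr0 Hnz). Qed.

Lemma df_bh_pos_horizon : 0 < df_bh k l mu r0.
Proof.
  pose proof (derive_ge0_at_root_right _ r0 _ Hroot f_bh_pos_horizon (f_bh_derive k l K mu r0 Hr0 Hl)).
  destruct (Req_dec (df_bh k l mu r0) 0) as [Heq|]; [exfalso|lra].
  destruct (double_root_mu_min k l K mu r0 Hl Hr0 HK Hroot Heq) as [HKm Hm].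
  destruct HK as [HK1|HK1]; [specialize (Hmu_min HK1); lra|].
  specialize (Hmu_pos HK1). rewrite HKm in HK1. lra.
Qed.

Lemma df_bh_pos_beyond r : r0 < r -> 0 < df_bh k l mu r.
Proof. intros Hr. apply (df_bh_pos k l mu r0); auto using df_bh_pos_horizon; lra. Qed.

(* Squaring would give [f'(r0) = 2 sqrt (f r0) d = 0]. *)
Lemma sqrt_f_bh_not_derivable_horizon d :
  ~ derivable_pt_lim (fun s => sqrt (f_bh k l K mu s)) r0 d.
Proof.
  intros Hd.
  pose proof (derivable_pt_lim_mult _ _ r0 d d Hd Hd) as Hsq.
  assert (Hdf : df_bh k l mu r0 = d * sqrt (f_bh k l K mu r0) + sqrt (f_bh k l K mu r0) * d).
  { eapply (derivable_pt_lim_unique_right _ _ r0); [|exact (f_bh_derive k l K mu r0 Hr0 Hl)|exact Hsq].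
    intros y Hy. unfold mult_fct. rewrite sqrt_sqrt; [reflexivity|].
    destruct (Req_dec y r0) as [->|]; [lra|]. apply Rlt_le, f_bh_pos_horizon. lra. }
  rewrite Hroot, sqrt_0 in Hdf. pose proof df_bh_pos_horizon. lra.
Qed.

Lemma lam_set_iff y : lam_set (S (S k)) l K mu r0 y <-> exists r, r0 < r /\ y = lam_at k l K mu r.
Proof.
  split.
  - intros [r [d [Hr [Hd ->]]]].
    change (derivable_pt_lim (fun s => sqrt (f_bh k l K mu s)) r d) in Hd.
    destruct (Req_dec r r0) as [->|Hne]; [exfalso; exact (sqrt_f_bh_not_derivable_horizon d Hd)|].
    exists r. split; [lra|].
    pose proof (sqrt_f_bh_derive k l K mu r ltac:(lra) Hl (f_bh_pos_horizon r ltac:(lra))) as Hd'.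
    rewrite (uniqueness_limite _ _ _ _ Hd Hd'). unfold lam_at, Rdiv. ring.
  - intros [r [Hr ->]]. exists r, (df_bh k l mu r / (2 * sqrt (f_bh k l K mu r))).
    split; [lra|]. split.
    + apply sqrt_f_bh_derive; [lra|auto|apply f_bh_pos_horizon, Hr].
    + unfold lam_at, Rdiv. ring.
Qed.

Lemma lam_at_pos r : r0 < r -> 0 < lam_at k l K mu r.
Proof.
  intros Hr. unfold lam_at. apply Rdiv_lt_0_compat.
  - apply Rmult_lt_0_compat; auto using df_bh_pos_beyond.
  - apply Rmult_lt_0_compat; [lra|apply sqrt_lt_R0, f_bh_pos_horizon, Hr].
Qed.

(* For [mu < 0] (hence [K = -1]) [slope_excess] increases from its nonnegative horizon value. *)
Lemma one_le_lam_at_beyond r : K <= 0 -> r0 < r -> 1 <= lam_at k l K mu r.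
Proof.
  intros HK0 Hr. apply one_le_lam_at; auto using f_bh_pos_horizon, df_bh_pos_beyond; try lra.
  destruct (Rle_or_lt 0 mu) as [Hm|Hm]; [apply slope_excess_nonneg; lra|].
  assert (HKm : K = -1).
  { destruct HK as [|[HK0'|HK1']]; [assumption| |lra]. pose proof (Hmu_pos (or_introl HK0')). lra. }
  rewrite HKm. apply Rle_trans with (slope_excess k l (-1) mu r0).
  - apply slope_excess_horizon_nonneg; auto. rewrite <- HKm. exact Hroot.
  - apply slope_excess_mono; auto. left; apply df_bh_pos_horizon.
Qed.

Lemma lam_set_glb_exists : exists lam, is_glb (lam_set (S (S k)) l K mu r0) lam.
Proof.
  apply is_glb_exists.
  - exists (lam_at k l K mu (r0 + 1)). apply lam_set_iff. exists (r0 + 1). split; [lra|reflexivity].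
  - exists 0. intros y Hy. apply lam_set_iff in Hy as [r [Hr ->]]. left; apply lam_at_pos, Hr.
Qed.

Section Glb.

Variable lam : R.
Hypothesis Hglb : is_glb (lam_set (S (S k)) l K mu r0) lam.

Lemma glb_le_lam_at r : r0 < r -> lam <= lam_at k l K mu r.
Proof. intros Hr. apply (proj1 Hglb), lam_set_iff. exists r. split; [exact Hr|reflexivity]. Qed.

Lemma le_glb b : (forall r, r0 < r -> b <= lam_at k l K mu r) -> b <= lam.
Proof. intros Hb. apply (proj2 Hglb). intros y Hy. apply lam_set_iff in Hy as [r [Hr ->]]. auto. Qed.

Lemma glb_eq_one : K = -1 \/ K = 0 -> lam = 1.
Proof.
  intros HK0. apply Rle_antisym.
  - destruct (Rle_or_lt lam 1) as [|Hgt]; [assumption|exfalso].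
    destruct (lam_at_lt_far k l K mu r0 lam Hl Hr0 K_ge_m1 Hgt f_bh_pos_horizon df_bh_pos_beyond)
      as [r [Hr Hlt]].
    pose proof (glb_le_lam_at r Hr). lra.
  - apply le_glb. intros r Hr. apply one_le_lam_at_beyond; [lra|exact Hr].
Qed.

Lemma glb_in_01 : K = 1 -> 0 < lam < 1.
Proof.
  intros HK1. assert (Hmu : 0 < mu) by (apply Hmu_pos; right; exact HK1).
  assert (Hpos1 : forall r, r0 < r -> 0 < f_bh k l 1 mu r) by (rewrite <- HK1; exact f_bh_pos_horizon).
  split.
  - apply Rlt_le_trans with (r0 / (r0 + l)); [apply Rdiv_lt_0_compat; lra|].
    apply le_glb. intros r Hr. rewrite HK1. apply lam_at_lower_bound; auto; lra.
  - destruct (lam_at_lt_one_far k l mu r0 Hl Hr0 Hmu Hpos1 df_bh_pos_beyond) as [r [Hr Hlt]].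
    pose proof (glb_le_lam_at r Hr). rewrite HK1 in *. lra.
Qed.

Lemma glb_div_le_dsqrt_f r : r0 < r -> lam / l <= df_bh k l mu r / (2 * sqrt (f_bh k l K mu r)).
Proof.
  intros Hr. apply (Rmult_le_reg_l l); [exact Hl|].
  replace (l * (lam / l)) with lam by (field; lra).
  replace (l * (df_bh k l mu r / (2 * sqrt (f_bh k l K mu r)))) with (lam_at k l K mu r)
    by (unfold lam_at, Rdiv; ring).
  apply glb_le_lam_at, Hr.
Qed.

Lemma glb_pos : 0 < lam.
Proof.
  destruct HK as [HK'|[HK'|HK']]; [| |apply glb_in_01, HK'];
    rewrite glb_eq_one by auto; lra.
Qed.

End Glb.

End Horizon.

(** * A radial Hardy inequality *)

Lemma is_RInt_of_RInt_eq (g : R -> R) a b I : RInt_eq g a b I -> is_RInt g a b I.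
Proof.
  intros [pr Hpr]. rewrite <- Hpr, <- RInt_Reals.
  apply (RInt_correct (V := R_CompleteNormedModule)). apply ex_RInt_Reals_1; auto.
Qed.

(* Riemann integrands are bounded, so [RInt g a c] vanishes as [c] decreases to [a]. *)
Lemma RInt_ge0_of_tails (g : R -> R) a b I : a < b -> is_RInt g a b I ->
  (forall c, a < c < b -> 0 <= RInt g c b) -> 0 <= I.
Proof.
  intros Hab HI Htail. destruct (Rle_or_lt 0 I) as [|HIneg]; [assumption|exfalso].
  assert (Hex : ex_RInt g a b) by (exists I; exact HI).
  destruct (ex_RInt_ub g a b Hex) as [M HM].
  rewrite Rmin_left, Rmax_right in HM by lra.
  set (B := Rabs M + 1).
  assert (HB : 0 < B) by (unfold B; pose proof (Rabs_pos M); lra).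
  set (d := Rmin (b - a) (- I / (2 * B))).
  assert (Hd : 0 < d) by (apply Rmin_pos; [|apply Rdiv_lt_0_compat]; lra).
  assert (HdB : d * B <= - I / 2).
  { apply Rle_trans with (- I / (2 * B) * B); [apply Rmult_le_compat_r; [lra|apply Rmin_r]|].
    right; field; lra. }
  set (c := a + d / 2).
  assert (Hc : a < c < b) by (pose proof (Rmin_l (b - a) (- I / (2 * B))); unfold c, d in *; lra).
  assert (Hac : ex_RInt g a c) by (apply (ex_RInt_Chasles_1 (V := R_CompleteNormedModule)) with b; [lra|auto]).
  assert (Hcb : ex_RInt g c b) by (apply (ex_RInt_Chasles_2 (V := R_CompleteNormedModule)) with a; [lra|auto]).
  assert (Hsplit : RInt g a c + RInt g c b = I).
  { rewrite <- (is_RInt_unique _ _ _ _ HI). apply (RInt_Chasles (V := R_CompleteNormedModule)); auto. }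
  assert (Hsmall : Rabs (RInt g a c) <= (c - a) * B).
  { apply abs_RInt_le_const; [lra|auto|]. intros t Ht.
    assert (Ht' : Rabs (g t) <= M) by exact (HM t ltac:(lra)).
    pose proof (Rle_abs M). unfold B. lra. }
  assert (Hca : (c - a) * B = d * B / 2) by (unfold c; field).
  specialize (Htail c Hc). pose proof (Rle_abs (- RInt g a c)). rewrite Rabs_Ropp in *. lra.
Qed.

Lemma continuity_2d_pt_comp2 (U A B : R -> R -> R) x y : continuous2 U ->
  continuity_2d_pt A x y -> continuity_2d_pt B x y ->
  continuity_2d_pt (fun a b => U (A a b) (B a b)) x y.
Proof.
  intros C CA CB eps. destruct (C (A x y) (B x y) eps (cond_pos eps)) as [d [Hd H]].
  eapply locally_2d_impl; [|exact (locally_2d_and _ _ x y (CA (mkposreal _ Hd)) (CB (mkposreal _ Hd)))].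
  apply locally_2d_forall. intros u v [H1 H2]. apply H; auto.
Qed.

Lemma continuity_pt_slice (k : R -> R -> R) x y :
  continuity_2d_pt k x y -> continuity_pt (fun t => k x t) y.
Proof.
  intros C. apply continuity_pt_locally. intro eps.
  apply (locally_2d_1d_const_x (fun u v => Rabs (k u v - k x y) < eps) x y (C eps)).
Qed.

Lemma continuity_2d_pt_fst (g : R -> R) x y : continuity_pt g x -> continuity_2d_pt (fun a _ => g a) x y.
Proof. intros. apply (continuity_1d_2d_pt_comp g (fun a _ => a)); auto. apply continuity_2d_pt_id1. Qed.

Lemma continuity_2d_pt_snd (g : R -> R) x y : continuity_pt g y -> continuity_2d_pt (fun _ b => g b) x y.
Proof. intros. apply (continuity_1d_2d_pt_comp g (fun _ b => b)); auto. apply continuity_2d_pt_id2. Qed.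

Lemma continuity_2d_pt_sqr (k : R -> R -> R) x y :
  continuity_2d_pt k x y -> continuity_2d_pt (fun a b => k a b ^ 2) x y.
Proof.
  intros C. apply continuity_2d_pt_ext with (fun a b => k a b * k a b).
  - intros; ring.
  - apply continuity_2d_pt_mult; auto.
Qed.

Lemma continuity_2d_pt_dbl_mult (k1 k2 : R -> R -> R) x y :
  continuity_2d_pt k1 x y -> continuity_2d_pt k2 x y ->
  continuity_2d_pt (fun a b => 2 * k1 a b * k2 a b) x y.
Proof.
  intros C1 C2. apply continuity_2d_pt_mult; auto.
  apply continuity_2d_pt_mult; auto. apply continuity_2d_pt_const.
Qed.

Lemma locally_gt r0 x : r0 < x -> locally x (fun y => r0 < y).
Proof. intros H. apply (open_gt r0). auto. Qed.

Lemma locally_2d_fst_gt r0 x y : r0 < x -> locally_2d (fun a _ => r0 < a) x y.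
Proof.
  intros H. assert (Hp : 0 < x - r0) by lra. exists (mkposreal _ Hp). simpl.
  intros u v Hu Hv. apply Rabs_def2 in Hu. lra.
Qed.

Lemma ex_RInt_slice (k : R -> R -> R) x T : 0 <= T -> (forall t, continuity_2d_pt k x t) ->
  ex_RInt (fun t => k x t) 0 T.
Proof.
  intros HT C. apply (ex_RInt_continuous (V := R_CompleteNormedModule)). intros t _.
  apply continuity_pt_filterlim. apply continuity_pt_slice. auto.
Qed.

(* Uniform continuity on [x - d0, x + d0] x [0, T], with [d0] keeping the strip inside [r0 < a]. *)
Lemma continuity_pt_RInt_param (k : R -> R -> R) r0 T x : 0 <= T -> r0 < x ->
  (forall a t, r0 < a -> continuity_2d_pt k a t) ->
  continuity_pt (fun y => RInt (fun t => k y t) 0 T) x.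
Proof.
  intros HT Hx C. apply continuity_pt_locally. intros eps.
  set (d0 := (x - r0) / 2). assert (Hd0 : 0 < d0) by (unfold d0; lra).
  assert (HTe : 0 < eps / (T + 1)) by (apply Rdiv_lt_0_compat; [apply cond_pos|lra]).
  destruct (uniform_continuity_2d k (x - d0) (x + d0) 0 T) with (mkposreal _ HTe) as [d Hd].
  { intros a b Ha Hb. apply C. unfold d0 in *; lra. }
  assert (Hm : 0 < Rmin d d0) by (apply Rmin_pos; [apply cond_pos|auto]).
  exists (mkposreal _ Hm). intros z Hz. change (Rabs (z - x) < Rmin d d0) in Hz.
  pose proof (Rmin_l d d0). pose proof (Rmin_r d d0).
  assert (Hzb : x - d0 <= z <= x + d0) by (apply Rabs_def2 in Hz; split; lra).
  assert (Ez : ex_RInt (fun t => k z t) 0 T) by (apply ex_RInt_slice; auto; intros; apply C; unfold d0 in *; lra).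
  assert (Ex : ex_RInt (fun t => k x t) 0 T) by (apply ex_RInt_slice; auto).
  rewrite <- (RInt_minus (V := R_CompleteNormedModule)) by auto.
  eapply Rle_lt_trans. apply (abs_RInt_le_const _ 0 T (eps / (T + 1))); auto.
  - apply (ex_RInt_minus (V := R_CompleteNormedModule)); auto.
  - intros t Ht. left. apply Hd; try lra.
    rewrite Rminus_diag, Rabs_R0. apply cond_pos.
  - replace ((T - 0) * (eps / (T + 1))) with (eps * (T / (T + 1))) by (field; lra).
    destruct eps as [e He]. simpl.
    assert (T / (T + 1) < 1) by (apply Rmult_lt_reg_r with (T + 1); [lra|]; unfold Rdiv; rewrite Rmult_assoc, Rinv_l; lra).
    nra.
Qed.

Lemma grad_sq_ge_flux (fr hd m vr ur ut : R) : 0 < fr -> 0 < m <= hd ->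
  - (m / 2) * (hd * vr ^ 2 + sqrt fr * (2 * vr * ur)) <= grad_sq fr ur ut - m ^ 2 / 4 * vr ^ 2.
Proof.
  intros Hfr Hm. unfold grad_sq.
  set (s := sqrt fr). assert (Hs : s * s = fr) by (apply sqrt_sqrt; lra).
  assert (0 <= ut ^ 2 / fr) by (apply Rmult_le_pos; [apply pow2_ge_0| left; apply Rinv_0_lt_compat; lra]).
  assert (0 <= (s * ur + m / 2 * vr) ^ 2) by apply pow2_ge_0.
  assert (0 <= (m / 2 * (hd - m)) * vr ^ 2) by (apply Rmult_le_pos; [nra| apply pow2_ge_0]).
  assert (Hid : s * s * ur ^ 2 - m ^ 2 / 4 * vr ^ 2 + (m / 2) * (hd * vr ^ 2 + s * (2 * vr * ur))
                = (s * ur + m / 2 * vr) ^ 2 + (m / 2 * (hd - m)) * vr ^ 2) by (clearbody s; field).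
  rewrite Hs in Hid. lra.
Qed.

Section RadialHardy.

Variables (r0 T m : R) (fr hd : R -> R) (v w : R -> R -> R).
Hypotheses (HT : 0 < T) (Hm : 0 < m)
  (Hfr : forall x, r0 < x -> 0 < fr x)
  (Dsqrt : forall x, r0 < x -> derivable_pt_lim (fun s => sqrt (fr s)) x (hd x))
  (Chd : forall x, r0 < x -> continuity_pt hd x)
  (Hhd : forall x, r0 < x -> m <= hd x)
  (Cv : forall a t, r0 < a -> continuity_2d_pt v a t)
  (Cw : forall a t, r0 < a -> continuity_2d_pt w a t)
  (Dv : forall a t, r0 < a -> derivable_pt_lim (fun s => v s t) a (w a t)).

Let ex_RInt_v2 x : r0 < x -> ex_RInt (fun t => v x t ^ 2) 0 T.
Proof. intros Hx. apply (ex_RInt_slice (fun a t => v a t ^ 2)); [lra|]. intros t. apply continuity_2d_pt_sqr, Cv, Hx. Qed.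

Let ex_RInt_vw x : r0 < x -> ex_RInt (fun t => 2 * v x t * w x t) 0 T.
Proof. intros Hx. apply (ex_RInt_slice (fun a t => 2 * v a t * w a t)); [lra|]. intros t. apply continuity_2d_pt_dbl_mult; auto. Qed.

Lemma is_derive_RInt_sqr x : r0 < x ->
  is_derive (fun y => RInt (fun t => v y t ^ 2) 0 T) x (RInt (fun t => 2 * v x t * w x t) 0 T).
Proof.
  intros Hx.
  assert (Dsq : forall a t, r0 < a -> is_derive (fun s => v s t ^ 2) a (2 * v a t * w a t)).
  { intros a t Ha. apply is_derive_Reals.
    replace (2 * v a t * w a t) with (INR 2 * (v a t) ^ (pred 2) * w a t) by (simpl; ring).
    apply (derivable_pt_lim_comp (fun s => v s t) (fun z => z ^ 2)); auto.
    apply derivable_pt_lim_pow. }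
  rewrite (RInt_ext _ (fun t => Derive (fun u => v u t ^ 2) x)).
  2:{ intros t _. symmetry. apply is_derive_unique, Dsq, Hx. }
  apply (is_derive_RInt_param (fun a t => v a t ^ 2)).
  - apply (filter_imp (fun y => r0 < y)); [|apply locally_gt, Hx].
    intros y Hy t _. eexists. apply Dsq, Hy.
  - intros t _. apply continuity_2d_pt_ext_loc with (fun a t => 2 * v a t * w a t).
    + apply locally_2d_impl with (fun a _ => r0 < a); [|apply locally_2d_fst_gt, Hx].
      apply locally_2d_forall. intros a b Ha. symmetry. apply is_derive_unique, Dsq, Ha.
    + apply continuity_2d_pt_dbl_mult; auto.
  - apply (filter_imp (fun y => r0 < y)); [|apply locally_gt, Hx]. exact ex_RInt_v2.
Qed.

Let flux y := - (m / 2) * (sqrt (fr y) * RInt (fun t => v y t ^ 2) 0 T).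
Let flux' y := - (m / 2) * (hd y * RInt (fun t => v y t ^ 2) 0 T
                            + sqrt (fr y) * RInt (fun t => 2 * v y t * w y t) 0 T).

Lemma flux_derive x : r0 < x -> is_derive flux x (flux' x).
Proof.
  intros Hx. apply is_derive_scal.
  apply (is_derive_mult (K := R_AbsRing) (fun y => sqrt (fr y)) (fun y => RInt (fun t => v y t ^ 2) 0 T)).
  - apply is_derive_Reals, Dsqrt, Hx.
  - apply is_derive_RInt_sqr, Hx.
  - intros; apply Rmult_comm.
Qed.

Lemma flux'_continuous x : r0 < x -> continuity_pt flux' x.
Proof.
  intros Hx. apply continuity_pt_scal, continuity_pt_plus; apply continuity_pt_mult.
  - apply Chd, Hx.
  - apply derivable_continuous_pt. eexists. apply is_derive_Reals, is_derive_RInt_sqr, Hx.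
  - apply derivable_continuous_pt. eexists. apply Dsqrt, Hx.
  - apply (continuity_pt_RInt_param (fun a t => 2 * v a t * w a t) r0); try lra.
    intros a t Ha. apply continuity_2d_pt_dbl_mult; auto.
Qed.

Lemma flux'_le (ut : R -> R -> R) x F1x F2x : r0 < x ->
  RInt_eq (fun t => grad_sq (fr x) (w x t) (ut x t)) 0 T F1x ->
  RInt_eq (fun t => v x t ^ 2) 0 T F2x ->
  flux' x <= F1x - m ^ 2 / 4 * F2x.
Proof.
  intros Hx H1 H2. apply is_RInt_of_RInt_eq in H1. apply is_RInt_of_RInt_eq in H2.
  apply (is_RInt_le (fun t => - (m / 2) * (hd x * v x t ^ 2 + sqrt (fr x) * (2 * v x t * w x t)))
      (fun t => grad_sq (fr x) (w x t) (ut x t) - m ^ 2 / 4 * v x t ^ 2) 0 T); [lra| | |].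
  - unfold flux'. rewrite (is_RInt_unique _ _ _ _ H2).
    apply (is_RInt_scal (V := R_NormedModule) (fun t => hd x * v x t ^ 2 + sqrt (fr x) * (2 * v x t * w x t))).
    apply (is_RInt_plus (V := R_NormedModule) (fun t => hd x * v x t ^ 2)).
    + apply (is_RInt_scal (V := R_NormedModule) (fun t => v x t ^ 2)), H2.
    + apply (is_RInt_scal (V := R_NormedModule) (fun t => 2 * v x t * w x t)).
      apply (RInt_correct (V := R_CompleteNormedModule)), ex_RInt_vw, Hx.
  - apply (is_RInt_minus (V := R_NormedModule)); [exact H1|].
    apply (is_RInt_scal (V := R_NormedModule) (fun t => v x t ^ 2)), H2.
  - intros t _. apply grad_sq_ge_flux; auto.
Qed.

Lemma flux_nonpos x : r0 < x -> flux x <= 0.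
Proof.
  intros Hx. unfold flux.
  assert (0 <= RInt (fun t => v x t ^ 2) 0 T) by (apply RInt_ge_0; [lra|apply ex_RInt_v2, Hx|intros; apply pow2_ge_0]).
  pose proof (sqrt_pos (fr x)).
  assert (0 <= sqrt (fr x) * RInt (fun t => v x t ^ 2) 0 T) by (apply Rmult_le_pos; auto).
  nra.
Qed.

Theorem radial_hardy (ut : R -> R -> R) (Rm : R) (F1 F2 : R -> R) (A1 A2 : R) :
  r0 < Rm -> (forall t, v Rm t = 0) ->
  (forall x, r0 < x -> RInt_eq (fun t => grad_sq (fr x) (w x t) (ut x t)) 0 T (F1 x)) ->
  (forall x, r0 < x -> RInt_eq (fun t => v x t ^ 2) 0 T (F2 x)) ->
  RInt_eq F1 r0 Rm A1 -> RInt_eq F2 r0 Rm A2 ->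
  m ^ 2 / 4 * A2 <= A1.
Proof.
  intros HRm Hv0 HF1 HF2 HA1 HA2.
  set (g := fun y => F1 y - m ^ 2 / 4 * F2 y).
  apply is_RInt_of_RInt_eq in HA1. apply is_RInt_of_RInt_eq in HA2.
  assert (Hg : is_RInt g r0 Rm (A1 - m ^ 2 / 4 * A2)).
  { apply (is_RInt_minus (V := R_NormedModule) F1 (fun y => m ^ 2 / 4 * F2 y)); auto.
    apply (is_RInt_scal (V := R_NormedModule) F2), HA2. }
  cut (0 <= A1 - m ^ 2 / 4 * A2); [lra|].
  apply (RInt_ge0_of_tails g r0 Rm); auto. intros a Ha.
  assert (Hflux : is_RInt flux' a Rm (flux Rm - flux a)).
  { apply (is_RInt_derive (V := R_CompleteNormedModule));
      intros y Hy; rewrite Rmin_left, Rmax_right in Hy by lra.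
    - apply flux_derive; lra.
    - apply continuity_pt_filterlim, flux'_continuous; lra. }
  assert (Hflux_end : flux Rm = 0).
  { unfold flux. rewrite (RInt_ext _ (fun _ => 0)), RInt_const.
    - change (scal (T - 0) 0) with ((T - 0) * 0). ring.
    - intros t _. rewrite Hv0. apply pow_i. auto with arith. }
  pose proof (flux_nonpos a ltac:(lra)).
  apply Rle_trans with (flux Rm - flux a); [lra|].
  apply (is_RInt_le flux' g a Rm); [lra|exact Hflux| |].
  - apply (RInt_correct (V := R_CompleteNormedModule)).
    apply (ex_RInt_Chasles_2 (V := R_CompleteNormedModule) g r0); [lra|exists (A1 - m ^ 2 / 4 * A2); exact Hg].
  - intros y Hy. apply (flux'_le ut); [lra|apply HF1; lra|apply HF2; lra].
Qed.

End RadialHardy.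

(** * Polar coordinates *)

Lemma MVT_between (g g' : R -> R) a b : (forall c, derivable_pt_lim g c (g' c)) ->
  exists c, Rabs (c - a) <= Rabs (b - a) /\ g b - g a = g' c * (b - a).
Proof.
  intros Hd. destruct (Rtotal_order a b) as [H|[H|H]].
  - destruct (MVT_cor2 g g' a b H (fun c _ => Hd c)) as [c [Hc1 Hc2]].
    exists c. split; auto. rewrite !Rabs_right by lra. lra.
  - subst. exists b. split; [rewrite Rminus_diag, Rabs_R0; lra|ring].
  - destruct (MVT_cor2 g g' b a H (fun c _ => Hd c)) as [c [Hc1 Hc2]].
    exists c. split; [rewrite !Rabs_left by lra; lra|lra].
Qed.

(* Continuous partial derivatives give a total derivative: one mean value step per variable. *)
Lemma differentiable_pt_lim_of_partials (U Ux Uy : R -> R -> R) x y :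
  (forall x y, derivable_pt_lim (fun z => U z y) x (Ux x y)) ->
  (forall x y, derivable_pt_lim (fun z => U x z) y (Uy x y)) ->
  continuous2 Ux -> continuous2 Uy -> differentiable_pt_lim U x y (Ux x y) (Uy x y).
Proof.
  intros Hx Hy Cx Cy eps.
  destruct (Cx x y (eps / 2) ltac:(destruct eps; simpl; lra)) as [d1 [Hd1 H1]].
  destruct (Cy x y (eps / 2) ltac:(destruct eps; simpl; lra)) as [d2 [Hd2 H2]].
  assert (Hd : 0 < Rmin d1 d2) by (apply Rmin_pos; auto).
  exists (mkposreal _ Hd). simpl. intros u v Hu Hv.
  pose proof (Rmin_l d1 d2). pose proof (Rmin_r d1 d2).
  destruct (MVT_between (fun z => U z v) (fun z => Ux z v) x u (fun c => Hx c v)) as [xi [Hxi Exi]].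
  destruct (MVT_between (fun z => U x z) (fun z => Uy x z) y v (fun c => Hy x c)) as [eta [Heta Eeta]].
  assert (A1 : Rabs (Ux xi v - Ux x y) < eps / 2) by (apply H1; lra).
  assert (A2 : Rabs (Uy x eta - Uy x y) < eps / 2) by (apply H2; [rewrite Rminus_diag, Rabs_R0|]; lra).
  replace (U u v - U x y - (Ux x y * (u - x) + Uy x y * (v - y))) with
    ((Ux xi v - Ux x y) * (u - x) + (Uy x eta - Uy x y) * (v - y)) by lra.
  eapply Rle_trans; [apply Rabs_triang|]. rewrite !Rabs_mult.
  pose proof (Rmax_l (Rabs (u - x)) (Rabs (v - y))). pose proof (Rmax_r (Rabs (u - x)) (Rabs (v - y))).
  pose proof (Rabs_pos (u - x)). pose proof (Rabs_pos (v - y)).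
  pose proof (Rabs_pos (Ux xi v - Ux x y)). pose proof (Rabs_pos (Uy x eta - Uy x y)).
  destruct eps as [e He]. simpl in *. nra.
Qed.

Lemma derivable_pt_lim_mult_const (g : R -> R) x d c :
  derivable_pt_lim g x d -> derivable_pt_lim (fun s => g s * c) x (d * c).
Proof.
  intros H. apply is_derive_Reals. apply is_derive_Reals in H.
  apply (is_derive_ext (fun s => c * g s)); [intros; apply Rmult_comm|].
  replace (d * c) with (c * d) by ring. apply is_derive_scal, H.
Qed.

Lemma continuity_2d_pt_polar (rho : R -> R) kap a b : continuity_pt rho a ->
  continuity_2d_pt (fun a b => rho a * cos (kap * b)) a b /\
  continuity_2d_pt (fun a b => rho a * sin (kap * b)) a b.
Proof.
  intros Crho. split; apply continuity_2d_pt_mult; try apply continuity_2d_pt_fst, Crho.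
  - apply (continuity_2d_pt_snd (fun t => cos (kap * t))), continuity_pt_filterlim.
    apply (ex_derive_continuous (K := R_AbsRing) (V := R_NormedModule) (fun t => cos (kap * t))). auto_derive. auto.
  - apply (continuity_2d_pt_snd (fun t => sin (kap * t))), continuity_pt_filterlim.
    apply (ex_derive_continuous (K := R_AbsRing) (V := R_NormedModule) (fun t => sin (kap * t))). auto_derive. auto.
Qed.

Lemma in_rt_continuous (u : R -> R -> R) (rho : R -> R) kap a b : continuous2 u -> continuity_pt rho a ->
  continuity_2d_pt (fun r t => in_rt rho kap u r t) a b.
Proof.
  intros Cu Crho. destruct (continuity_2d_pt_polar rho kap a b Crho).
  apply (continuity_2d_pt_comp2 u); auto.
Qed.

Lemma in_rt_derive_r (u ux uy : R -> R -> R) (rho : R -> R) kap a b drho :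
  (forall x y, derivable_pt_lim (fun z => u z y) x (ux x y)) ->
  (forall x y, derivable_pt_lim (fun z => u x z) y (uy x y)) ->
  continuous2 ux -> continuous2 uy -> derivable_pt_lim rho a drho ->
  derivable_pt_lim (fun s => in_rt rho kap u s b) a
    (ux (rho a * cos (kap * b)) (rho a * sin (kap * b)) * (drho * cos (kap * b))
     + uy (rho a * cos (kap * b)) (rho a * sin (kap * b)) * (drho * sin (kap * b))).
Proof.
  intros Dx Dy Cx Cy Drho. unfold in_rt.
  apply (derivable_pt_lim_comp_2d u (fun s => rho s * cos (kap * b)) (fun s => rho s * sin (kap * b))).
  - apply differentiable_pt_lim_of_partials; auto.
  - apply derivable_pt_lim_mult_const, Drho.
  - apply derivable_pt_lim_mult_const, Drho.
Qed.

(* [ur] is only known through its defining derivative, so it is replaced by the chain-rule formula. *)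
Lemma in_rt_derive_r_continuous (u ur : R -> R -> R) (rho drho : R -> R) kap r0 a b : smooth2 u ->
  (forall r, r0 < r -> derivable_pt_lim rho r (drho r)) ->
  (forall r, r0 < r -> continuity_pt drho r) ->
  (forall r t, r0 < r -> derivable_pt_lim (fun s => in_rt rho kap u s t) r (ur r t)) ->
  r0 < a -> continuity_2d_pt ur a b.
Proof.
  intros Hsm Drho Cdrho Dur Ha.
  destruct (Hsm 1%nat) as [_ [ux [uy [Dx [Dy [Cx Cy]]]]]].
  set (X := fun a b => rho a * cos (kap * b)). set (Y := fun a b => rho a * sin (kap * b)).
  apply continuity_2d_pt_ext_loc with
    (fun a b => ux (X a b) (Y a b) * (drho a * cos (kap * b)) + uy (X a b) (Y a b) * (drho a * sin (kap * b))).
  - apply locally_2d_impl with (fun a _ => r0 < a); [|apply locally_2d_fst_gt, Ha].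
    apply locally_2d_forall. intros a' b' Ha'.
    eapply uniqueness_limite; [apply in_rt_derive_r; auto|apply Dur, Ha'].
  - assert (Crho : forall a, r0 < a -> continuity_pt rho a)
      by (intros a' Ha'; apply derivable_continuous_pt; eexists; apply Drho, Ha').
    destruct (continuity_2d_pt_polar rho kap a b (Crho a Ha)) as [CX CY].
    destruct (continuity_2d_pt_polar drho kap a b (Cdrho a Ha)) as [CdX CdY].
    apply continuity_2d_pt_plus; apply continuity_2d_pt_mult; auto;
      apply (continuity_2d_pt_comp2 _ X Y); auto.
Qed.

Lemma continuity_pt_inv_sqrt (g : R -> R) x : derivable_pt g x -> 0 < g x ->
  continuity_pt (fun y => 1 / sqrt (g y)) x.
Proof.
  intros Dg Hg. apply (continuity_pt_div (fun _ => 1) (fun y => sqrt (g y))).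
  - apply continuity_pt_const. intros p q; reflexivity.
  - apply (continuity_pt_comp g sqrt); [apply derivable_continuous_pt, Dg|].
    apply derivable_continuous_pt, derivable_pt_sqrt, Hg.
  - assert (0 < sqrt (g x)) by (apply sqrt_lt_R0, Hg). lra.
Qed.

Theorem mainTheorem8 (n : nat) (l K mu r0 : R) :
  (2 <= n)%nat -> 0 < l ->
  (K = -1 \/ K = 0 \/ K = 1) ->
  ((K = 0 \/ K = 1) -> 0 < mu) ->
  (K = -1 -> mu_min n l < mu) ->
  0 < r0 -> fBH n l K mu r0 = 0 ->
  (forall r, r0 < r -> fBH n l K mu r <> 0) ->
  exists lam : R,
    is_glb (lam_set n l K mu r0) lam /\
    ((K = -1 \/ K = 0) -> lam = 1) /\
    (K = 1 -> 0 < lam < 1) /\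
    (forall (fp0 : R) (rho : R -> R),
      derivable_pt_lim (fBH n l K mu) r0 fp0 ->
      rho r0 = 0 ->
      (forall eps, 0 < eps -> exists delta, 0 < delta /\
         forall r, r0 <= r < r0 + delta -> Rabs (rho r) < eps) ->
      (forall r, r0 < r -> derivable_pt_lim rho r (1 / sqrt (fBH n l K mu r))) ->
      forall u : R -> R -> R,
        smooth2 u -> compact_support2 u ->
        forall ur ut : R -> R -> R,
          (forall r t, r0 < r ->
             derivable_pt_lim (fun s => in_rt rho (fp0 / 2) u s t) r (ur r t)) ->
          (forall r t, r0 < r ->
             derivable_pt_lim (fun s => in_rt rho (fp0 / 2) u r s) t (ut r t)) ->
          forall Rmax : R, r0 < Rmax ->
          (forall r t, Rmax <= r -> in_rt rho (fp0 / 2) u r t = 0) ->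
          forall (F1 F2 : R -> R) (A1 A2 : R),
            (forall r, r0 < r ->
               RInt_eq (fun t => grad_sq (fBH n l K mu r) (ur r t) (ut r t))
                 0 (4 * PI / fp0) (F1 r)) ->
            (forall r, r0 < r ->
               RInt_eq (fun t => (in_rt rho (fp0 / 2) u r t) ^ 2)
                 0 (4 * PI / fp0) (F2 r)) ->
            RInt_eq F1 r0 Rmax A1 ->
            RInt_eq F2 r0 Rmax A2 ->
            lam ^ 2 / (4 * l ^ 2) * A2 <= A1).
Proof.
  intros Hn Hl HK Hmu_pos Hmu_min Hr0 Hroot Hnz.
  destruct n as [|[|k]]; [lia|lia|].
  change (fBH (S (S k)) l K mu) with (f_bh k l K mu) in *.
  destruct (lam_set_glb_exists k l K mu r0 Hl HK Hmu_pos Hmu_min Hr0 Hroot Hnz) as [lam Hglb].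
  exists lam. split; [exact Hglb|].
  split; [exact (glb_eq_one k l K mu r0 Hl HK Hmu_pos Hmu_min Hr0 Hroot Hnz lam Hglb)|].
  split; [exact (glb_in_01 k l K mu r0 Hl HK Hmu_pos Hmu_min Hr0 Hroot Hnz lam Hglb)|].
  intros fp0 rho Dfp0 _ _ Drho u Hsm _ ur ut Dur _ Rm HRm Hvanish F1 F2 A1 A2 HF1 HF2 HA1 HA2.
  pose proof (f_bh_pos_horizon k l K mu r0 Hl HK Hmu_pos Hmu_min Hr0 Hroot Hnz) as Hpos.
  assert (Hfp0 : 0 < fp0).
  { rewrite (uniqueness_limite _ _ _ _ Dfp0 (f_bh_derive k l K mu r0 Hr0 Hl)).
    exact (df_bh_pos_horizon k l K mu r0 Hl HK Hmu_pos Hmu_min Hr0 Hroot Hnz). }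
  pose proof (glb_pos k l K mu r0 Hl HK Hmu_pos Hmu_min Hr0 Hroot Hnz lam Hglb) as Hlam.
  replace (lam ^ 2 / (4 * l ^ 2) * A2) with ((lam / l) ^ 2 / 4 * A2) by (field; lra).
  apply (radial_hardy r0 (4 * PI / fp0) (lam / l) (f_bh k l K mu)
           (fun r => df_bh k l mu r / (2 * sqrt (f_bh k l K mu r))) (fun r t => in_rt rho (fp0 / 2) u r t) ur)
    with (ut := ut) (Rm := Rm) (F1 := F1) (F2 := F2); auto.
  - apply Rdiv_lt_0_compat; [pose proof PI_RGT_0|]; lra.
  - apply Rdiv_lt_0_compat; lra.
  - intros r Hr. apply sqrt_f_bh_derive; auto; lra.
  - intros r Hr. apply dsqrt_f_bh_continuous; auto; lra.
  - exact (glb_div_le_dsqrt_f k l K mu r0 Hl HK Hmu_pos Hmu_min Hr0 Hroot Hnz lam Hglb).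
  - intros a t Ha. apply in_rt_continuous; [apply (Hsm 0%nat)|].
    apply derivable_continuous_pt. eexists. apply Drho, Ha.
  - intros a t Ha. apply (in_rt_derive_r_continuous u ur rho (fun r => 1 / sqrt (f_bh k l K mu r)) (fp0 / 2) r0); auto.
    intros r Hr. apply continuity_pt_inv_sqrt; [eexists; apply f_bh_derive|apply Hpos]; lra.
  - intros t. apply Hvanish. lra.
Qed.
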